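(* Under the exploration assumption in the context, for any policy $\pi$ with $\pi_{\min}:=\min_{s,a}\pi(a\mid s)>0$, the pair \[ \bar C_\pi=\Big(1-\tfrac12\delta_b\pi_{\min}^{r_b+1}\mu_{\pi_b,\min}\pi_{b,\min}\Big)^{-1},\qquad\bar\rho_\pi=\Big(1-\tfrac12\delta_b\pi_{\min}^{r_b+1}\mu_{\pi_b,\min}\pi_{b,\min}\Big)^{1/(r_b+1)} \] are valid mixing parameters of the lazy transition matrix $\bar{\mathcal P}_\pi$, i.e. $\max_{(s,a)}\|\bar{\mathcal P}_\pi^k((s,a),\cdot)-\bar\mu_\pi\|_{\mathrm{TV}}\le\bar C_\pi\bar\rho_\pi^k$ for all $k\ge0$.
   Context: Finite MDP: states $\mathcal S$, actions $\mathcal A$, kernel $p(s'\mid s,a)$. Exploration assumption: a policy $\pi_b$ with $\pi_b(a\mid s)>0$ for all $(s,a)$ induces an irreducible state chain $P_{\pi_b}(s,s')=\sum_ap(s'\mid s,a)\pi_b(a\mid s)$; $\pi_{b,\min}=\min_{s,a}\pi_b(a\mid s)$; $\mu_{\pi_b}$ its stationary distribution and $\mu_{\pi_b,\min}=\min_s\mu_{\pi_b}(s)$; $\mathcal P_{\pi_b}=(P_{\pi_b}+I)/2$; $r_b\in\mathbb Z_+$ and $\delta_b>0$ satisfy $\min_{s,s'}\mathcal P_{\pi_b}^{r_b}(s,s')\ge\delta_b$. For a policy $\pi$ with positive entries, $\bar P_\pi((s,a),(s',a'))=p(s'\mid s,a)\pi(a'\mid s')$ is the state-action transition matrix, $\bar{\mathcal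 P}_\pi=(\bar P_\pi+I)/2$ its lazy version, and $\bar\mu_\pi(s,a)=\mu_\pi(s)\pi(a\mid s)$ its stationary distribution, with $\mu_\pi$ the stationary distribution of the state chain $P_\pi$. $\|\cdot\|_{\mathrm{TV}}$ is the total variation distance. *)

From HB Require Import structures.
From mathcomp Require Import all_boot all_order all_algebra.
From mathcomp Require Import reals exp.
Set Implicit Arguments. Unset Strict Implicit. Unset Printing Implicit Defensive.
Import Order.TTheory GRing.Theory Num.Theory.
Local Open Scope ring_scope.

Fixpoint mpow (R : realType) (X : finType) (k : nat) (P : X -> X -> R) : X -> X -> R :=
  match k with
  | 0%N => fun x y => (x == y)%:R
  | k'.+1 => fun x y => \sum_(z : X) mpow k' P x z * P z y
  end.

Definition lazyK (R : realType) (X : finType) (P : X -> X -> R) : X -> X -> R :=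
  fun x y => (P x y + (x == y)%:R) / 2.

(* minimum of a function over a finite type (0 if the type is empty) *)
Definition fmin (R : realType) (X : finType) (f : X -> R) : R :=
  match [pick x : X] with
  | Some x0 => \big[Order.min/f x0]_(x : X) f x
  | None => 0
  end.

Definition tv (R : realType) (X : finType) (m1 m2 : X -> R) : R :=
  (\sum_(x : X) `|m1 x - m2 x|) / 2.

Definition stochastic (R : realType) (X : finType) (P : X -> X -> R) : Prop :=
  (forall x y, 0 <= P x y) /\ (forall x, \sum_(y : X) P x y = 1).

Definition distribution (R : realType) (X : finType) (m : X -> R) : Prop :=
  (forall x, 0 <= m x) /\ \sum_(x : X) m x = 1.

Definition stationary (R : realType) (X : finType) (P : X -> X -> R) (m : X -> R) : Prop :=
  distribution m /\ (forall y, \sum_(x : X) m x * P x y = m y).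

Definition irreducible (R : realType) (X : finType) (P : X -> X -> R) : Prop :=
  forall x y, exists n, 0 < mpow n P x y.

(* MDP kernel p(s'|s,a) : p s a s' ; policy pi(a|s) : pi s a *)
Definition mdp_kernel (R : realType) (S A : finType) (p : S -> A -> S -> R) : Prop :=
  (forall s a s', 0 <= p s a s') /\ (forall s a, \sum_(s' : S) p s a s' = 1).

Definition policy (R : realType) (S A : finType) (pi : S -> A -> R) : Prop :=
  (forall s a, 0 <= pi s a) /\ (forall s, \sum_(a : A) pi s a = 1).

Definition Pstate (R : realType) (S A : finType) (p : S -> A -> S -> R) (pi : S -> A -> R)
  : S -> S -> R := fun s s' => \sum_(a : A) p s a s' * pi s a.

Definition Pbar (R : realType) (S A : finType) (p : S -> A -> S -> R) (pi : S -> A -> R)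
  : (S * A)%type -> (S * A)%type -> R := fun x y => p x.1 x.2 y.1 * pi y.1 y.2.

(* stationary distribution of the state-action chain *)
Definition mubar (R : realType) (S A : finType) (mu : S -> R) (pi : S -> A -> R)
  : (S * A)%type -> R := fun x => mu x.1 * pi x.1 x.2.

Definition polmin (R : realType) (S A : finType) (pi : S -> A -> R) : R :=
  fmin (fun x : (S * A)%type => pi x.1 x.2).

(* Write M for the lazy state-action chain of pi and K = pi_min^(rb+1) deltab / 2.
   Entrywise M >= pi_min * (lazy state-action chain of pib), and averaging the latter's
   rb-step kernel over pib(s, .) yields the rb-step lazy state chain of pib, which is
   >= deltab.  Spending one extra step of M to reach a pib-distributed action gives the
   Doeblin minorisation M^(rb+1)(x, (s', a')) >= K pib(s', a') >= K mub(s') pib(s', a').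
   A minorant of total mass K shrinks the l1 distance to the stationary law by 1 - K every
   rb+1 steps; since 1 - K <= c and the last incomplete block costs a factor c^-1, this
   gives the bound c^-1 (c^(1/(rb+1)))^k. *)

From mathcomp Require Import all_boot all_order all_algebra.
From mathcomp Require Import reals exp.
From mathcomp Require Import ring lra.
Set Implicit Arguments. Unset Strict Implicit. Unset Printing Implicit Defensive.

Import Order.TTheory GRing.Theory Num.Theory.
Local Open Scope ring_scope.

Section Kernels.
Variables (R : realType) (X : finType).
Implicit Types (P Q : X -> X -> R) (m v eta : X -> R).

Lemma mpowD P a b x y :
  mpow (a + b) P x y = \sum_z mpow a P x z * mpow b P z y.
Proof.
elim: b y => [|b IH] y /=.
  rewrite addn0 (bigD1 y) //= eqxx mulr1 big1 ?addr0 // => z /negbTE ->.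
  by rewrite mulr0.
rewrite addnS /=.
under eq_bigr => w _ do rewrite IH mulr_suml.
rewrite exchange_big /=; apply: eq_bigr => z _.
by rewrite mulr_sumr; apply: eq_bigr => w _; rewrite mulrA.
Qed.

Lemma mpow1 P x y : mpow 1 P x y = P x y.
Proof.
rewrite /= (bigD1 x) //= eqxx mul1r big1 ?addr0 // => z.
by rewrite eq_sym => /negbTE ->; rewrite mul0r.
Qed.

Lemma mpowSl P k x y : mpow k.+1 P x y = \sum_z P x z * mpow k P z y.
Proof. by rewrite -add1n mpowD; apply: eq_bigr => z _; rewrite mpow1. Qed.

Lemma mpow_ge0 P k x y : (forall x y, 0 <= P x y) -> 0 <= mpow k P x y.
Proof.
move=> P_ge0; elim: k y => [|k IH] y /=; first by rewrite ler0n.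
by apply: sumr_ge0 => z _; apply: mulr_ge0.
Qed.

Lemma stochastic_mpow P k : stochastic P -> stochastic (mpow k P).
Proof.
move=> [P_ge0 P_sum1]; split=> [x y|x]; first exact: mpow_ge0.
elim: k => [|k IH] /=.
  rewrite (bigD1 x) //= eqxx big1 ?addr0 // => z.
  by rewrite eq_sym => /negbTE ->.
rewrite exchange_big /= -IH; apply: eq_bigr => z _.
by rewrite -mulr_sumr P_sum1 mulr1.
Qed.

Lemma distribution_le1 m x : distribution m -> m x <= 1.
Proof.
move=> [m_ge0 m_sum1]; rewrite -m_sum1 (bigD1 x) //= lerDl.
exact: sumr_ge0.
Qed.

Lemma stochastic_le1 P x y : stochastic P -> P x y <= 1.
Proof. by move=> [P_ge0 P_sum1]; apply: distribution_le1. Qed.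

Lemma stochastic_lazyK P : stochastic P -> stochastic (lazyK P).
Proof.
move=> [P_ge0 P_sum1]; split=> [x y|x].
  by rewrite /lazyK divr_ge0 ?addr_ge0 ?ler0n.
rewrite /lazyK -mulr_suml big_split /= P_sum1 (bigD1 x) //= eqxx big1 ?addr0.
  by rewrite -mulr2n divff // pnatr_eq0.
by move=> z; rewrite eq_sym => /negbTE ->.
Qed.

Lemma stationary_lazyK P m : stationary P m -> stationary (lazyK P) m.
Proof.
move=> [m_distr m_inv]; split=> // y.
under eq_bigr => x _ do rewrite /lazyK mulrA mulrDr.
rewrite -mulr_suml big_split /= m_inv (bigD1 y) //= eqxx mulr1 big1 ?addr0.
  by field.
by move=> z /negbTE ->; rewrite mulr0.
Qed.

Lemma stationary_mpow P m k y :
  stationary P m -> \sum_x m x * mpow k P x y = m y.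
Proof.
move=> [_ m_inv]; elim: k y => [|k IH] y /=.
  rewrite (bigD1 y) //= eqxx mulr1 big1 ?addr0 // => x /negbTE ->.
  by rewrite mulr0.
under eq_bigr => x _ do rewrite mulr_sumr.
rewrite exchange_big /= -m_inv; apply: eq_bigr => z _.
by rewrite -IH mulr_suml; apply: eq_bigr => x _; rewrite mulrA.
Qed.

Lemma mpow_ge_scale P Q c k x y :
  (forall x y, 0 <= Q x y) -> 0 <= c -> (forall x y, c * Q x y <= P x y) ->
  c ^+ k * mpow k Q x y <= mpow k P x y.
Proof.
move=> Q_ge0 c_ge0 cQ_le_P; elim: k y => [|k IH] y /=; first by rewrite mul1r.
rewrite mulr_sumr; apply: ler_sum => z _.
rewrite exprSr mulrACA; apply: ler_pM => //.
  by rewrite mulr_ge0 ?exprn_ge0 ?mpow_ge0.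
by rewrite mulr_ge0.
Qed.

Lemma lazyK_ge_scale P Q c x y :
  0 <= c <= 1 -> c * Q x y <= P x y -> c * lazyK Q x y <= lazyK P x y.
Proof.
move=> /andP[c_ge0 c_le1] cQ_le_P; rewrite /lazyK mulrA ler_pM2r ?invr_gt0 ?ltr0n //.
by rewrite mulrDr lerD // ler_piMl ?ler0n.
Qed.

Lemma fmin_le (f : X -> R) x : fmin f <= f x.
Proof. by rewrite /fmin; case: pickP => [x0 _|/(_ x) //]; apply: bigmin_le. Qed.

Lemma fmin_ge0 (f : X -> R) :
  (forall x, 0 <= f x) -> 0 <= fmin f.
Proof. by move=> f_ge0; rewrite /fmin; case: pickP => // x0 _; apply: le_bigmin. Qed.

Lemma fmin_ge0_le1 m (x : X) : distribution m -> 0 <= fmin m <= 1.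
Proof.
move=> m_distr; rewrite fmin_ge0 ?(le_trans (fmin_le m x)) ?distribution_le1 //.
by case: m_distr.
Qed.

Lemma doeblin_contraction N eta v :
  (forall x, \sum_y N x y = 1) -> (forall x y, eta y <= N x y) ->
  \sum_x v x = 0 ->
  \sum_y `|\sum_x v x * N x y| <= (1 - \sum_y eta y) * \sum_x `|v x|.
Proof.
move=> N_sum1 eta_le_N v_sum0.
have centre y : \sum_x v x * N x y = \sum_x v x * (N x y - eta y).
  under [RHS]eq_bigr => x _ do rewrite mulrBr.
  by rewrite sumrB -mulr_suml v_sum0 mul0r subr0.
under eq_bigr => y _ do rewrite centre.
apply: (le_trans (y := \sum_y \sum_x `|v x| * (N x y - eta y))).
  apply: ler_sum => y _; apply: (le_trans (ler_norm_sum _ _ _)).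
  apply: ler_sum => x _; rewrite normrM [`|N x y - _|]ger0_norm ?subr_ge0 //.
rewrite exchange_big /= mulr_sumr; apply: ler_sum => x _.
by rewrite -mulr_sumr sumrB N_sum1 mulrC.
Qed.

End Kernels.

Section Doeblin.
Variables (R : realType) (X : finType) (P : X -> X -> R) (m eta : X -> R) (r : nat).
Hypotheses (P_stoch : stochastic P) (m_stat : stationary P m)
  (eta_minor : forall x y, eta y <= mpow r.+1 P x y).

Let l1dist k x := \sum_y `|mpow k P x y - m y|.

Lemma sum_mpow_sub_stationary k x : \sum_y (mpow k P x y - m y) = 0.
Proof.
by rewrite sumrB (proj2 (stochastic_mpow k P_stoch)) (proj2 (proj1 m_stat)) subrr.
Qed.

Lemma mpow_sub_stationaryD j i x y :
  \sum_z (mpow j P x z - m z) * mpow i P z y = mpow (j + i) P x y - m y.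
Proof.
under eq_bigr => z _ do rewrite mulrBl.
by rewrite sumrB mpowD (stationary_mpow _ _ m_stat).
Qed.

Lemma l1dist_mpowD_le j i x : l1dist (j + i) x <= l1dist j x.
Proof.
have [Pi_ge0 Pi_sum1] := stochastic_mpow i P_stoch.
have := doeblin_contraction Pi_sum1 Pi_ge0 (sum_mpow_sub_stationary j x).
rewrite big1_eq subr0 mul1r.
by under eq_bigr => y _ do rewrite mpow_sub_stationaryD.
Qed.

Lemma l1dist_mpow_contract j x :
  l1dist (j + r.+1) x <= (1 - \sum_y eta y) * l1dist j x.
Proof.
have [_ Pr_sum1] := stochastic_mpow r.+1 P_stoch.
have := doeblin_contraction Pr_sum1 eta_minor (sum_mpow_sub_stationary j x).
by under eq_bigr => y _ do rewrite mpow_sub_stationaryD.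
Qed.

Lemma l1dist_mpow0_le2 x : l1dist 0 x <= 2.
Proof.
have [[m_ge0 m_sum1] _] := m_stat.
apply: (le_trans (y := \sum_y ((x == y)%:R + m y))).
  apply: ler_sum => y _; apply: (le_trans (ler_normB _ _)).
  by rewrite ger0_norm ?ler0n // ger0_norm.
rewrite big_split /= m_sum1 (bigD1 x) //= eqxx big1 ?addr0 //.
by move=> z; rewrite eq_sym => /negbTE ->.
Qed.

Lemma sum_minorant_le1 (x : X) : \sum_y eta y <= 1.
Proof.
rewrite -(proj2 (stochastic_mpow r.+1 P_stoch) x).
by apply: ler_sum => y _.
Qed.

Lemma l1dist_mpow_blocks q x : l1dist (q * r.+1) x <= 2 * (1 - \sum_y eta y) ^+ q.
Proof.
have contr_ge0 : 0 <= 1 - \sum_y eta y by rewrite subr_ge0 (sum_minorant_le1 x).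
elim: q => [|q IH]; first by rewrite mulr1 l1dist_mpow0_le2.
rewrite mulSn addnC exprS mulrCA.
apply: le_trans (l1dist_mpow_contract _ _) _.
exact: ler_wpM2l.
Qed.

Lemma tv_mpow_le_doeblin k x :
  tv (fun y => mpow k P x y) m <= (1 - \sum_y eta y) ^+ (k %/ r.+1).
Proof.
rewrite /tv ler_pdivrMr ?ltr0n // mulrC {1}(divn_eq k r.+1).
exact: le_trans (l1dist_mpowD_le _ _ _) (l1dist_mpow_blocks _ _).
Qed.

End Doeblin.

Lemma geometric_blocks_le (R : realType) (c : R) (r k : nat) :
  0 < c -> c <= 1 -> c ^+ (k %/ r.+1) <= c^-1 * (c `^ (r.+1%:R)^-1) ^+ k.
Proof.
move=> c_gt0 c_le1.
set rho := c `^ _.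
have rho_ge0 : 0 <= rho by apply: powR_ge0.
have rhoX : rho ^+ r.+1 = c.
  rewrite /rho -powR_mulrn ?powR_ge0 // -powRrM mulVf ?pnatr_eq0 //.
  by rewrite powRr1 // ltW.
have rho_le1 : rho <= 1 by rewrite -(@expr_le1 _ r.+1) // rhoX.
rewrite -[c ^+ _]mul1r -(mulVf (lt0r_neq0 c_gt0)) -mulrA -exprS.
rewrite ler_pM2l ?invr_gt0 // -rhoX -exprM; apply: ler_wiXn2l => //.
by rewrite mulnC ltnW // ltn_ceil.
Qed.

Lemma sum_pair (R : realType) (S A : finType) (F : (S * A)%type -> R) :
  \sum_(z : S * A) F z = \sum_s \sum_a F (s, a).
Proof. by rewrite (pair_bigA _ (fun s a => F (s, a))); apply: eq_bigr => -[]. Qed.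

Lemma mixing_rate_bounds (R : realType) (r : nat) (m delta f q : R) :
  0 <= m <= 1 -> 0 <= delta <= 1 -> 0 <= f <= 1 -> 0 <= q <= 1 ->
  let K := m ^+ r.+1 * delta / 2 in
  let c := 1 - delta * m ^+ r.+1 * f * q / 2 in
  [/\ 0 <= K, 0 < c <= 1 & 0 <= 1 - K <= c].
Proof.
move=> /andP[m_ge0 m_le1] /andP[delta_ge0 delta_le1] /andP[f_ge0 f_le1] /andP[q_ge0 q_le1] K c.
have -> : c = 1 - m ^+ r.+1 * delta * (f * q) / 2 by rewrite /c; ring.
have : 0 <= m ^+ r.+1 * delta <= 1 by rewrite mulr_ge0 ?mulr_ile1 ?exprn_ge0 ?exprn_ile1.
have : 0 <= f * q <= 1 by rewrite mulr_ge0 ?mulr_ile1.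
rewrite /K; move: (m ^+ r.+1 * delta) (f * q) => x t /andP[t_ge0 t_le1] /andP[x_ge0 x_le1].
by split; [|apply/andP; split..]; nra.
Qed.

Section MDP.
Variables (R : realType) (S A : finType) (p : S -> A -> S -> R).
Implicit Types (pi : S -> A -> R) (mu : S -> R).

Lemma policy_le1 pi s a : policy pi -> pi s a <= 1.
Proof. by move=> [pi_ge0 pi_sum1]; apply: distribution_le1. Qed.

Lemma polmin_le pi s a : polmin pi <= pi s a.
Proof. exact: (fmin_le (fun x : S * A => pi x.1 x.2) (s, a)). Qed.

Lemma polmin_ge0 pi : policy pi -> 0 <= polmin pi.
Proof. by move=> [pi_ge0 _]; apply: fmin_ge0 => -[]. Qed.

Lemma polmin_ge0_le1 pi (s : S) (a : A) : policy pi -> 0 <= polmin pi <= 1.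
Proof.
by move=> pi_pol; rewrite polmin_ge0 ?(le_trans (polmin_le pi s a)) ?policy_le1.
Qed.

Lemma stochastic_Pstate pi : mdp_kernel p -> policy pi -> stochastic (Pstate p pi).
Proof.
move=> [p_ge0 p_sum1] [pi_ge0 pi_sum1]; split=> [s s'|s].
  by apply: sumr_ge0 => a _; apply: mulr_ge0.
rewrite /Pstate exchange_big /= -(pi_sum1 s); apply: eq_bigr => a _.
by rewrite -mulr_suml p_sum1 mul1r.
Qed.

Lemma stochastic_Pbar pi : mdp_kernel p -> policy pi -> stochastic (Pbar p pi).
Proof.
move=> [p_ge0 p_sum1] [pi_ge0 pi_sum1]; split=> [x y|x]; first exact: mulr_ge0.
rewrite sum_pair -(p_sum1 x.1 x.2); apply: eq_bigr => s _.
by rewrite /Pbar /= -mulr_sumr pi_sum1 mulr1.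
Qed.

Lemma distribution_mubar pi mu :
  policy pi -> distribution mu -> distribution (mubar mu pi).
Proof.
move=> [pi_ge0 pi_sum1] [mu_ge0 mu_sum1]; split=> [x|]; first exact: mulr_ge0.
rewrite sum_pair -mu_sum1; apply: eq_bigr => s _.
by rewrite /mubar /= -mulr_sumr pi_sum1 mulr1.
Qed.

Lemma stationary_Pbar_mubar pi mu :
  policy pi -> stationary (Pstate p pi) mu -> stationary (Pbar p pi) (mubar mu pi).
Proof.
move=> pi_pol [mu_distr mu_inv]; split=> [|y]; first exact: distribution_mubar.
rewrite sum_pair /mubar /Pbar /= -mu_inv mulr_suml.
apply: eq_bigr => s _; rewrite /Pstate mulr_sumr mulr_suml.
by apply: eq_bigr => a _ /=; ring.
Qed.

Lemma lazyK_Pbar_ge_polmin pi pib x y :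
  mdp_kernel p -> policy pi -> policy pib ->
  polmin pi * lazyK (Pbar p pib) x y <= lazyK (Pbar p pi) x y.
Proof.
move=> [p_ge0 _] pi_pol pib_pol.
have m_le_pi := polmin_le pi y.1 y.2.
apply: lazyK_ge_scale.
  by rewrite polmin_ge0 //= (le_trans m_le_pi) ?policy_le1.
rewrite /Pbar mulrCA; apply: ler_wpM2l => //; apply: le_trans m_le_pi.
by rewrite ler_piMr ?polmin_ge0 ?policy_le1 //; case: pib_pol.
Qed.

Lemma sum_policy_indicator pi s s' a' :
  \sum_a pi s a * ((s, a) == (s', a'))%:R = (s == s')%:R * pi s' a'.
Proof.
have [<-|ne_ss'] := eqVneq s s'; last first.
  by rewrite mul0r big1 // => a _; rewrite xpair_eqE (negbTE ne_ss') mulr0.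
rewrite (bigD1 a') //= eqxx mulr1 mul1r big1 ?addr0 // => a ne_aa'.
by rewrite xpair_eqE eqxx (negbTE ne_aa') mulr0.
Qed.

Lemma sum_policy_lazyK_Pbar pi s s' a' :
  \sum_a pi s a * lazyK (Pbar p pi) (s, a) (s', a')
  = lazyK (Pstate p pi) s s' * pi s' a'.
Proof.
have move_part : \sum_a pi s a * (p s a s' * pi s' a')
                 = (\sum_a p s a s' * pi s a) * pi s' a'.
  by rewrite mulr_suml; apply: eq_bigr => a _; rewrite mulrA (mulrC (pi s a)).
rewrite /lazyK /Pbar /Pstate /=.
under eq_bigr => a _ do rewrite mulrA mulrDr.
by rewrite -mulr_suml big_split /= move_part sum_policy_indicator; ring.
Qed.

Lemma sum_policy_mpow_lazyK_Pbar pi k s s' a' :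
  \sum_a pi s a * mpow k (lazyK (Pbar p pi)) (s, a) (s', a')
  = mpow k (lazyK (Pstate p pi)) s s' * pi s' a'.
Proof.
elim: k s => [|k IH] s; first exact: sum_policy_indicator.
under eq_bigr => a _ do rewrite mpowSl mulr_sumr.
rewrite exchange_big sum_pair mpowSl mulr_suml; apply: eq_bigr => s1 _.
rewrite -mulrA -IH mulr_sumr; apply: eq_bigr => a1 _.
rewrite mulrA -sum_policy_lazyK_Pbar mulr_suml.
by apply: eq_bigr => a _; rewrite mulrA.
Qed.

End MDP.

Lemma mpow_lazyK_Pbar_minor (R : realType) (S A : finType) (p : S -> A -> S -> R)
    (pi pib : S -> A -> R) (r : nat) (delta : R) :
  mdp_kernel p -> policy pi -> policy pib ->
  (forall s s', delta <= mpow r (lazyK (Pstate p pib)) s s') ->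
  forall x s' a',
  polmin pi ^+ r.+1 * delta / 2 * pib s' a' <= mpow r.+1 (lazyK (Pbar p pi)) x (s', a').
Proof.
move=> p_ker pi_pol pib_pol delta_le x s' a'.
have [p_ge0 p_sum1] := p_ker; have [pib_ge0 _] := pib_pol.
set m := polmin pi; set M := lazyK (Pbar p pi); set Mb := lazyK (Pbar p pib).
have m_ge0 : 0 <= m by apply: polmin_ge0.
have Mb_ge0 := proj1 (stochastic_lazyK (stochastic_Pbar p_ker pib_pol)).
have first_step z : p x.1 x.2 z.1 * (m * pib z.1 z.2) / 2 <= M x z.
  rewrite /M /lazyK /Pbar; apply: ler_wpM2r; first by rewrite invr_ge0 ler0n.
  rewrite ler_wpDr ?ler0n //; apply: ler_wpM2l => //.
  by rewrite (le_trans _ (polmin_le pi z.1 z.2)) // ler_piMr ?policy_le1.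
have later_steps z : m ^+ r * mpow r Mb z (s', a') <= mpow r M z (s', a').
  by apply: mpow_ge_scale => // ? ?; apply: lazyK_Pbar_ge_polmin.
have lumped s1 :
    \sum_a1 p x.1 x.2 s1 * (m * pib s1 a1) / 2 * (m ^+ r * mpow r Mb (s1, a1) (s', a'))
    = p x.1 x.2 s1 * (m ^+ r.+1 / 2) * (mpow r (lazyK (Pstate p pib)) s1 s' * pib s' a').
  rewrite -sum_policy_mpow_lazyK_Pbar mulr_sumr.
  by apply: eq_bigr => a1 _; rewrite exprS; ring.
rewrite mpowSl sum_pair.
apply: (le_trans (y := \sum_s1 \sum_a1
  p x.1 x.2 s1 * (m * pib s1 a1) / 2 * (m ^+ r * mpow r Mb (s1, a1) (s', a')))).
  under [X in _ <= X]eq_bigr => s1 _ do rewrite lumped.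
  rewrite -[X in X <= _]mul1r -{1}(p_sum1 x.1 x.2) mulr_suml.
  apply: ler_sum => s1 _; rewrite -[leRHS]mulrA; apply: ler_wpM2l => //.
  have -> : m ^+ r.+1 * delta / 2 * pib s' a' = m ^+ r.+1 / 2 * (delta * pib s' a').
    by ring.
  apply: ler_wpM2l; first by rewrite divr_ge0 ?exprn_ge0.
  exact: ler_wpM2r.
apply: ler_sum => s1 _; apply: ler_sum => a1 _.
apply: ler_pM (first_step (s1, a1)) (later_steps (s1, a1)).
  by rewrite divr_ge0 ?ler0n // !mulr_ge0.
by rewrite mulr_ge0 ?exprn_ge0 // mpow_ge0.
Qed.

Theorem lemma8 (R : realType) (S A : finType)
  (p : S -> A -> S -> R) (pib : S -> A -> R) (mub : S -> R)
  (rb : nat) (deltab : R)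
  (hp : mdp_kernel p)
  (hpib : policy pib) (hpib_pos : forall s a, 0 < pib s a)
  (hirr : irreducible (Pstate p pib))
  (hmub : stationary (Pstate p pib) mub)
  (hdelta : 0 < deltab)
  (hrb : forall s s', deltab <= mpow rb (lazyK (Pstate p pib)) s s')
  (pi : S -> A -> R) (mu : S -> R)
  (hpi : policy pi) (hpimin : 0 < polmin pi)
  (hmu : stationary (Pstate p pi) mu) :
  let c := 1 - deltab * polmin pi ^+ rb.+1 * fmin mub * polmin pib / 2 in
  let Cbar := c^-1 in
  let rhobar := c `^ (rb.+1%:R)^-1 in
  forall (k : nat) (x : (S * A)%type),
    tv (fun y => mpow k (lazyK (Pbar p pi)) x y) (mubar mu pi) <= Cbar * rhobar ^+ k.
Proof.
move=> c Cbar rhobar k [s0 a0].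
have [mub_distr _] := hmub; have [_ mubar_sum1] := distribution_mubar hpib mub_distr.
have delta_bounds : 0 <= deltab <= 1.
  rewrite ltW //=; apply: le_trans (hrb s0 s0) (stochastic_le1 _ _ _).
  exact/stochastic_mpow/stochastic_lazyK/stochastic_Pstate.
have [K_ge0 /andP[c_gt0 c_le1] /andP[contr_ge0 contr_le_c]] := mixing_rate_bounds rb
  (polmin_ge0_le1 s0 a0 hpi) delta_bounds
  (fmin_ge0_le1 s0 mub_distr) (polmin_ge0_le1 s0 a0 hpib).
apply: le_trans (geometric_blocks_le _ _ c_gt0 c_le1).
set K := polmin pi ^+ rb.+1 * deltab / 2.
have eta_minor z y : K * mubar mub pib y <= mpow rb.+1 (lazyK (Pbar p pi)) z y.
  apply: le_trans (mpow_lazyK_Pbar_minor hp hpi hpib hrb z y.1 y.2).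
  by apply: ler_wpM2l => //; rewrite /mubar ler_piMl ?distribution_le1 ?ltW.
apply: le_trans (tv_mpow_le_doeblin _ _ eta_minor _ _) _.
- exact/stochastic_lazyK/stochastic_Pbar.
- exact/stationary_lazyK/stationary_Pbar_mubar.
rewrite -mulr_sumr mubar_sum1 mulr1; apply: lerXn2r => //; rewrite nnegrE ltW //.
Qed.
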